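(* There exists $m_1>0$ with the following property. Let $f$ be a solution of $\frac{f''}{1+(f')^2}=\left(\frac r2-\frac{n-1}{r}\right)f'-\frac f2$ with $f(\sqrt{2(n-1)})>0$, and suppose $f'(r)>0$ and $f''(r)<0$ for all $r<\sqrt{2(n-1)}$ in its domain. Then $f(r)<0$ whenever $r<m_1$ and $f(r)$ is defined.
   Context: $n\ge2$ is a fixed integer; $f$ is a real function of $r>0$ defined on an interval containing $\sqrt{2(n-1)}$. *)

From Stdlib Require Import Reals.
From Coquelicot Require Import Coquelicot.
Open Scope R_scope.

Definition rstar (n : nat) : R := sqrt (2 * (INR n - 1)).

Definition in_dom (a : R) (b : Rbar) (r : R) : Prop := a < r /\ Rbar_lt r b.

Definition is_solution (n : nat) (a : R) (b : Rbar) (f f1 f2 : R -> R) : Prop :=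
  forall r, in_dom a b r ->
    is_derive f r (f1 r) /\ is_derive f1 r (f2 r) /\
    f2 r / (1 + (f1 r) ^ 2) = (r / 2 - (INR n - 1) / r) * f1 r - f r / 2.

(* Let s = sqrt(2(n-1)) and flux(t) = t exp(-t^2/4) f'(t).  For t < s the
   equation and f' > 0 give flux' <= -t exp(-t^2/4) f/2, so the flux is nonincreasing
   as long as f >= 0.  If f(r) >= 0 then f >= 0 on [r, s] (f is increasing),
   and a comparison on [3s/4, s] gives flux(p) >= kappa f(s) for some p in
   [3s/4, s), with kappa > 0 depending only on s.  Hence u f'(u) >= flux(u)
   >= kappa f(s) on [r, s/2], and integrating f' >= kappa f(s)/u yields
   f(s) >= f(s/2) - f(r) >= kappa f(s) ln(s/(2r)), forcing r >= s/2 exp(-1/kappa). *)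

From Stdlib Require Import Reals Lra.
From Coquelicot Require Import Coquelicot.
Open Scope R_scope.

Lemma in_dom_between (a : R) (b : Rbar) x y v :
  in_dom a b x -> in_dom a b y -> x <= v <= y -> in_dom a b v.
Proof.
intros [Hax _] [_ Hyb] Hv; split; [lra |].
apply Rbar_le_lt_trans with (Finite y); [simpl; lra | exact Hyb].
Qed.

Lemma is_solution_f2 (n : nat) (a : R) (b : Rbar) (f f1 f2 : R -> R) v :
  is_solution n a b f f1 f2 -> in_dom a b v ->
  f2 v = (1 + f1 v ^ 2) * ((v / 2 - (INR n - 1) / v) * f1 v - f v / 2).
Proof.
intros Hsol Hv; destruct (Hsol v Hv) as [_ [_ Hode]].
rewrite <- Hode; field.
generalize (pow2_ge_0 (f1 v)); lra.
Qed.

Lemma is_derive_mvt (h dh : R -> R) x y : x < y ->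
  (forall t, x <= t <= y -> is_derive h t (dh t)) ->
  exists c, x < c < y /\ h y - h x = dh c * (y - x).
Proof.
intros Hxy Hd.
destruct (MVT_cor2 h dh x y Hxy) as [c [Hc1 Hc2]].
- intros c Hc; apply is_derive_Reals; auto.
- exists c; auto.
Qed.

Lemma is_derive_nondecreasing (h dh : R -> R) x y : x <= y ->
  (forall t, x <= t <= y -> is_derive h t (dh t)) ->
  (forall t, x < t < y -> 0 <= dh t) -> h x <= h y.
Proof.
intros Hxy Hd Hpos.
destruct (Rle_lt_or_eq_dec x y Hxy) as [Hlt | ->]; [| lra].
destruct (is_derive_mvt h dh x y Hlt Hd) as [c [Hc Heq]].
specialize (Hpos c Hc); nra.
Qed.

Lemma is_derive_nonincreasing (h dh : R -> R) x y : x <= y ->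
  (forall t, x <= t <= y -> is_derive h t (dh t)) ->
  (forall t, x < t < y -> dh t <= 0) -> h y <= h x.
Proof.
intros Hxy Hd Hneg.
enough (- h x <= - h y) by lra.
apply (is_derive_nondecreasing (fun t => - h t) (fun t => - dh t)); [lra | |].
- intros t Ht; exact (is_derive_opp h t (dh t) (Hd t Ht)).
- intros t Ht; specialize (Hneg t Ht); lra.
Qed.

Lemma log_growth (h dh : R -> R) c x y : 0 < x -> x <= y ->
  (forall t, x <= t <= y -> is_derive h t (dh t)) ->
  (forall t, x <= t <= y -> c <= t * dh t) ->
  h x + c * (ln y - ln x) <= h y.
Proof.
intros Hx Hxy Hd Hc.
enough (h x - c * ln x <= h y - c * ln y) by lra.
apply (is_derive_nondecreasing (fun t => h t - c * ln t) (fun t => dh t - c * / t));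
  [lra | |].
- intros t Ht.
  apply (is_derive_minus h (fun t => c * ln t)); [now apply Hd |].
  apply is_derive_scal, is_derive_ln; lra.
- intros t Ht.
  assert (Hct : c * / t <= dh t).
  { apply Rmult_le_reg_l with t; [lra |].
    replace (t * (c * / t)) with c by (field; lra).
    apply Hc; lra. }
  lra.
Qed.

Definition gauss (t : R) : R := exp (- (t ^ 2) / 4).

Lemma gauss_pos t : 0 < gauss t.
Proof. apply exp_pos. Qed.

Lemma gauss_le_1 t : gauss t <= 1.
Proof.
unfold gauss; rewrite <- exp_0.
destruct (Req_dec t 0) as [-> | Ht].
- right; f_equal; field.
- left; apply exp_increasing.
  generalize (pow2_gt_0 t Ht); lra.
Qed.

Lemma gauss_decreasing x y : 0 <= x -> x < y -> gauss y < gauss x.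
Proof. intros Hx Hxy; apply exp_increasing; nra. Qed.

Lemma is_derive_gauss t : is_derive gauss t (- (t / 2) * gauss t).
Proof.
unfold gauss; auto_derive; [easy |].
replace (- (t * (t * 1)) * / 4) with (- (t ^ 2) / 4) by field.
field.
Qed.

Lemma is_derive_id_mul_gauss t :
  is_derive (fun u => u * gauss u) t (gauss t * (1 - t ^ 2 / 2)).
Proof.
replace (gauss t * (1 - t ^ 2 / 2)) with (1 * gauss t + t * (- (t / 2) * gauss t))
  by field.
apply (is_derive_mult (fun u => u) gauss).
- auto_derive; [easy | ring].
- apply is_derive_gauss.
- intros; apply Rmult_comm.
Qed.

(* For [g = f'(v)] and [f''] given by the equation, the left side is
   [exp (v^2/4)] times the derivative of the flux [v exp (-v^2/4) f'(v)]. *)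
Lemma flux_integrand_le v k g fv : 0 < v -> v * v < 2 * k -> 1 <= k ->
  0 < g -> 0 <= fv ->
  (1 - v ^ 2 / 2) * g + v * ((1 + g ^ 2) * ((v / 2 - k / v) * g - fv / 2))
  <= - (v * fv / 2).
Proof.
intros Hv Hvk Hk Hg Hf.
replace ((1 - v ^ 2 / 2) * g + v * ((1 + g ^ 2) * ((v / 2 - k / v) * g - fv / 2)))
  with (g * (1 - k) + g ^ 3 * (v * v / 2 - k) - g ^ 2 * (v * fv) / 2 - v * fv / 2)
  by (field; lra).
assert (0 <= g ^ 2 * (v * fv)) by (apply Rmult_le_pos; nra).
assert (0 < g ^ 3) by (apply pow_lt; lra).
assert (g ^ 3 * (v * v / 2 - k) <= 0) by nra.
nra.
Qed.

Definition kappa (s : R) : R :=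
  Rmin ((gauss (3 * s / 4) - gauss (7 * s / 8)) / 2) (3 / 2 * gauss s).

Definition barrier_radius (s : R) : R := s / 2 * exp (- / kappa s).

Lemma kappa_pos s : 0 < s -> 0 < kappa s.
Proof.
intros Hs; apply Rmin_glb_lt.
- assert (gauss (7 * s / 8) < gauss (3 * s / 4)) by (apply gauss_decreasing; lra).
  lra.
- generalize (gauss_pos s); lra.
Qed.

Lemma barrier_radius_pos s : 0 < s -> 0 < barrier_radius s.
Proof.
intros Hs; unfold barrier_radius.
generalize (exp_pos (- / kappa s)); nra.
Qed.

Lemma barrier_radius_lt_half s : 0 < s -> barrier_radius s < s / 2.
Proof.
intros Hs; unfold barrier_radius.
assert (Hexp : exp (- / kappa s) < 1).
{ rewrite <- exp_0; apply exp_increasing.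
  generalize (Rinv_0_lt_compat _ (kappa_pos s Hs)); lra. }
nra.
Qed.

Section NonnegativeSolution.

Variables (k s r : R) (f f1 f2 : R -> R).
Hypothesis k_ge_1 : 1 <= k.
Hypothesis s_sq : s * s = 2 * k.
Hypothesis s_pos : 0 < s.
Hypothesis r_pos : 0 < r.
Hypothesis r_lt_half : r < s / 2.
Hypothesis f_deriv : forall v, r <= v <= s -> is_derive f v (f1 v).
Hypothesis f1_deriv : forall v, r <= v <= s -> is_derive f1 v (f2 v).
Hypothesis ode : forall v, r <= v <= s ->
  f2 v = (1 + f1 v ^ 2) * ((v / 2 - k / v) * f1 v - f v / 2).
Hypothesis f1_pos : forall v, r <= v < s -> 0 < f1 v.
Hypothesis f_r_nonneg : 0 <= f r.
Hypothesis f_s_pos : 0 < f s.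

Lemma f_nondecreasing x y : r <= x -> x <= y -> y <= s -> f x <= f y.
Proof.
intros Hx Hxy Hy; apply (is_derive_nondecreasing f f1); [lra | |].
- intros t Ht; apply f_deriv; lra.
- intros t Ht; apply Rlt_le, f1_pos; lra.
Qed.

Lemma f_nonneg v : r <= v <= s -> 0 <= f v.
Proof. intros Hv; generalize (f_nondecreasing r v); lra. Qed.

Let flux (t : R) : R := t * gauss t * f1 t.

Let dflux (t : R) : R := gauss t * ((1 - t ^ 2 / 2) * f1 t + t * f2 t).

Lemma is_derive_flux v : r <= v <= s -> is_derive flux v (dflux v).
Proof.
intros Hv; unfold flux, dflux.
replace (gauss v * ((1 - v ^ 2 / 2) * f1 v + v * f2 v))
  with (gauss v * (1 - v ^ 2 / 2) * f1 v + v * gauss v * f2 v) by ring.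
apply (is_derive_mult (fun t => t * gauss t) f1).
- apply is_derive_id_mul_gauss.
- now apply f1_deriv.
- intros; apply Rmult_comm.
Qed.

Lemma dflux_le v : r <= v < s -> dflux v <= - (v * gauss v * f v / 2).
Proof.
intros Hv; unfold dflux; rewrite (ode v) by lra.
replace (- (v * gauss v * f v / 2)) with (gauss v * (- (v * f v / 2))) by field.
apply Rmult_le_compat_l; [apply Rlt_le, gauss_pos |].
apply flux_integrand_le; try lra.
- nra.
- apply f1_pos; lra.
- apply f_nonneg; lra.
Qed.

Lemma flux_nonincreasing x y : r <= x -> x <= y -> y < s -> flux y <= flux x.
Proof.
intros Hx Hxy Hy; apply (is_derive_nonincreasing flux dflux); [lra | |].
- intros t Ht; apply is_derive_flux; lra.
- intros t Ht.
  assert (0 <= t * gauss t * f t).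
  { apply Rmult_le_pos; [generalize (gauss_pos t); nra | apply f_nonneg; lra]. }
  generalize (dflux_le t); lra.
Qed.

(* If [f] rises by [f(s)/2] on [[3s/4, s]], the mean value theorem gives a steep point. *)
Lemma flux_large_steep : f (3 * s / 4) < f s / 2 ->
  exists p, 3 * s / 4 <= p < s /\ 3 / 2 * gauss s * f s <= flux p.
Proof.
intros Hrise.
destruct (is_derive_mvt f f1 (3 * s / 4) s) as [p [Hp Hmvt]]; [lra | |].
{ intros t Ht; apply f_deriv; lra. }
exists p; split; [lra |].
assert (Hslope : 2 * f s / s < f1 p).
{ apply Rmult_lt_reg_r with (s / 4); [lra |].
  replace (2 * f s / s * (s / 4)) with (f s / 2) by (field; lra).
  lra. }
assert (Hgauss : gauss s < gauss p) by (apply gauss_decreasing; lra).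
replace (3 / 2 * gauss s * f s) with (3 * s / 4 * gauss s * (2 * f s / s))
  by (field; lra).
assert (0 < gauss s) by apply gauss_pos.
assert (0 < 2 * f s / s) by (apply Rdiv_lt_0_compat; lra).
unfold flux; apply Rmult_le_compat; try nra.
Qed.

(* Otherwise [f >= f(s)/2] on [[3s/4, 7s/8]], so [dflux <= f(s)/2 * gauss'] there. *)
Lemma flux_large_flat : f s / 2 <= f (3 * s / 4) ->
  (gauss (3 * s / 4) - gauss (7 * s / 8)) / 2 * f s <= flux (3 * s / 4).
Proof.
intros Hhalf.
assert (Hcmp : flux (7 * s / 8) - f s / 2 * gauss (7 * s / 8)
               <= flux (3 * s / 4) - f s / 2 * gauss (3 * s / 4)).
{ apply (is_derive_nonincreasing (fun t => flux t - f s / 2 * gauss t)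
           (fun t => dflux t - f s / 2 * (- (t / 2) * gauss t))); [lra | |].
  - intros t Ht.
    apply (is_derive_minus flux (fun t => f s / 2 * gauss t)).
    + apply is_derive_flux; lra.
    + apply is_derive_scal, is_derive_gauss.
  - intros t Ht.
    assert (f s / 2 <= f t) by (generalize (f_nondecreasing (3 * s / 4) t); lra).
    assert (0 < t * gauss t) by (generalize (gauss_pos t); nra).
    generalize (dflux_le t); nra. }
assert (0 < flux (7 * s / 8)).
{ unfold flux; generalize (gauss_pos (7 * s / 8)) (f1_pos (7 * s / 8)).
  intros; apply Rmult_lt_0_compat; [nra | lra]. }
lra.
Qed.

Lemma flux_large : exists p, 3 * s / 4 <= p < s /\ kappa s * f s <= flux p.
Proof.
destruct (Rlt_or_le (f (3 * s / 4)) (f s / 2)) as [Hrise | Hhalf].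
- destruct (flux_large_steep Hrise) as [p [Hp Hflux]].
  exists p; split; [exact Hp |].
  apply Rle_trans with (3 / 2 * gauss s * f s); [| exact Hflux].
  apply Rmult_le_compat_r; [lra | apply Rmin_r].
- exists (3 * s / 4); split; [lra |].
  apply Rle_trans with ((gauss (3 * s / 4) - gauss (7 * s / 8)) / 2 * f s).
  + apply Rmult_le_compat_r; [lra | apply Rmin_l].
  + now apply flux_large_flat.
Qed.

Lemma id_mul_f1_lower u : r <= u <= s / 2 -> kappa s * f s <= u * f1 u.
Proof.
intros Hu.
destruct flux_large as [p [Hp Hflux]].
assert (Hmono : flux p <= flux u) by (apply flux_nonincreasing; lra).
assert (0 < u * f1 u) by (generalize (f1_pos u); nra).
assert (u * gauss u * f1 u <= u * f1 u).
{ replace (u * gauss u * f1 u) with (gauss u * (u * f1 u)) by ring.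
  generalize (gauss_le_1 u); nra. }
unfold flux in *; lra.
Qed.

Lemma barrier_radius_le : barrier_radius s <= r.
Proof.
assert (Hkap : 0 < kappa s) by now apply kappa_pos.
assert (Hgrowth : f r + kappa s * f s * (ln (s / 2) - ln r) <= f (s / 2)).
{ apply (log_growth f f1); try lra.
  - intros t Ht; apply f_deriv; lra.
  - exact id_mul_f1_lower. }
assert (f (s / 2) <= f s) by (apply f_nondecreasing; lra).
destruct (Rle_or_lt (barrier_radius s) r) as [Hle | Hlt]; [exact Hle | exfalso].
assert (Hln : / kappa s < ln (s / 2) - ln r).
{ assert (Hlnr : ln r < ln (barrier_radius s)) by (apply ln_increasing; lra).
  unfold barrier_radius in Hlnr.
  rewrite ln_mult, ln_exp in Hlnr by (lra || apply exp_pos); lra. }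
assert (f s < kappa s * f s * (ln (s / 2) - ln r)).
{ replace (f s) with (kappa s * f s * / kappa s) at 1 by (field; lra).
  apply Rmult_lt_compat_l; nra. }
lra.
Qed.

End NonnegativeSolution.

Theorem lemma2p6 (n : nat) (Hn : (2 <= n)%nat) :
  exists m1 : R, 0 < m1 /\
    forall (a : R) (b : Rbar) (f f1 f2 : R -> R),
      0 <= a ->
      in_dom a b (rstar n) ->
      is_solution n a b f f1 f2 ->
      f (rstar n) > 0 ->
      (forall r, in_dom a b r -> r < rstar n -> f1 r > 0 /\ f2 r < 0) ->
      forall r, in_dom a b r -> r < m1 -> f r < 0.
Proof.
set (s := rstar n).
assert (Hk : 1 <= INR n - 1) by (apply le_INR in Hn; simpl in Hn; lra).
assert (Hs2 : s * s = 2 * (INR n - 1)) by (apply sqrt_sqrt; lra).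
assert (Hs : 0 < s) by (apply sqrt_lt_R0; lra).
exists (barrier_radius s); split; [now apply barrier_radius_pos |].
intros a b f f1 f2 Ha Hsd Hsol Hfs Hsign r Hr Hrm.
destruct (Rlt_or_le (f r) 0) as [Hneg | Hnonneg]; [exact Hneg | exfalso].
assert (Hdom : forall v, r <= v <= s -> in_dom a b v)
  by (intros; now apply (in_dom_between a b r s)).
enough (barrier_radius s <= r) by lra.
apply (barrier_radius_le (INR n - 1) s r f f1 f2); try lra.
- destruct Hr; lra.
- generalize (barrier_radius_lt_half s Hs); lra.
- intros v Hv; apply (Hsol v (Hdom v Hv)).
- intros v Hv; apply (Hsol v (Hdom v Hv)).
- intros v Hv; apply (is_solution_f2 n a b); auto.
- intros v Hv; apply (Hsign v); [apply Hdom |]; lra.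
Qed.
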